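(* Let $V$ be a countable set, $\Lambda\subseteq\mathbb N_0$, and let $E$ be the set of unordered pairs $\{i,j\}$ of distinct elements of $V$ (edges of the complete graph on $V$). Consider a configuration process with generator $\mathcal L=\sum_{\{i,j\}\in E}\mathcal L_{i,j}$, where $$\mathcal L_{i,j}f(\eta)=c_{i,j}(\eta_i,\eta_j)[f(\eta^{i,j})-f(\eta)]+c_{j,i}(\eta_j,\eta_i)[f(\eta^{j,i})-f(\eta)],$$ with $\eta^{i,j}:=\eta-\delta_i+\delta_j$ and rate functions $c_{i,j}:\Lambda\times\Lambda\to\mathbb R$. Then $[\mathcal L_{i,j},\mathcal A]=0$ for all $\{i,j\}\in E$ if and only if there exist $\theta:E\to\mathbb R$ and $\alpha:V^2\to\mathbb R$ such that $$c_{i,j}(\kappa,m)=\kappa\big(\theta(\{i,j\})\,m+\alpha(i,j)\big)\qquad\text{for all } i\neq j,\ \kappa,m\in\Lambda.$$ As a consequence, the configuration process with rates of this form is consistent, i.e. $[\mathcal L,\mathcal A]=0$.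
   Context: Configurations are $\eta\in\Lambda^V$ with finitely many particles; $\delta_z$ is the configuration with a single particle at $z$. The annihilation operator acts on functions $f$ of configurations by $\mathcal Af(\eta)=\sum_{x\in V}a_xf(\eta)$, $a_xf(\eta)=\eta_xf(\eta-\delta_x)$ if $\eta_x\ge1$ and $0$ if $\eta_x=0$. $[\cdot,\cdot]$ is the commutator. *)

From mathcomp Require Import all_boot all_order all_algebra.
From mathcomp Require Import boolp classical_sets functions cardinality fsbigop reals.
Set Implicit Arguments. Unset Strict Implicit. Unset Printing Implicit Defensive.
Import Order.TTheory GRing.Theory Num.Theory.
Local Open Scope ring_scope.

(* The state space of the process is the
   set of finitely supported configurations with values in Lambda (see
   [in_state_space]); test functions f are defined on all of V -> int so
   that expressions like f(eta - delta_i + delta_j) always make sense. *)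
Definition config (V : Type) := V -> int.

Definition delta (V : eqType) (z : V) : config V := fun y => (y == z)%:Z.

Definition jump (V : eqType) (eta : config V) (i j : V) : config V :=
  fun y => eta y - delta i y + delta j y.

Definition remove1 (V : eqType) (eta : config V) (x : V) : config V :=
  fun y => eta y - delta x y.

Definition finite_config (V : Type) (eta : config V) : Prop :=
  finite_set [set x | eta x != 0].

Definition in_state_space (V : Type) (Lam : pred nat) (eta : config V) : Prop :=
  finite_config eta /\ (forall x, 0 <= eta x /\ Lam `|eta x|%N).

Definition annihilation (R : realType) (V : countType)
  (f : config V -> R) (eta : config V) : R :=
  \sum_(x \in [set: V]) (eta x)%:~R * f (remove1 eta x).

(* Edge generator L_{i,j} with rate functions c i j : nat -> nat -> R
   (only values on Lambda x Lambda are ever used). *)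
Definition gen_edge (R : realType) (V : countType)
  (c : V -> V -> nat -> nat -> R) (i j : V)
  (f : config V -> R) (eta : config V) : R :=
  c i j `|eta i|%N `|eta j|%N * (f (jump eta i j) - f eta)
  + c j i `|eta j|%N `|eta i|%N * (f (jump eta j i) - f eta).

Definition commutator (R : realType) (V : Type)
  (P Q : (config V -> R) -> config V -> R)
  (f : config V -> R) (eta : config V) : R :=
  P (Q f) eta - Q (P f) eta.

Definition commutes_edge (R : realType) (V : countType) (Lam : pred nat)
  (c : V -> V -> nat -> nat -> R) (i j : V) : Prop :=
  forall (f : config V -> R) (eta : config V), in_state_space Lam eta ->
    commutator (gen_edge c i j) (@annihilation R V) f eta = 0.

From mathcomp Require Import all_boot all_order all_algebra.
From mathcomp Require Import boolp classical_sets functions cardinality fsbigop reals.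
From mathcomp Require Import ring lra zify.

(* L_ij only moves particles between i and j, so it commutes with the
   annihilation a_x at every other site x, and [L_ij, A] f (eta) reduces to
   the contributions of x = i and x = j.  With a = eta_i and b = eta_j these
   involve f only at eta - 2 delta_i + delta_j, eta - delta_i, eta - delta_j and
   eta - 2 delta_j + delta_i, with coefficients [recursion_defect] (for (i,j)
   and (j,i)) and [balance_defect].  Test functions separating these four
   configurations show that commutation amounts to the vanishing of both
   defects on Lambda x Lambda.  The first gives c_ij(k,m) = k c_ij(1,m); the
   second then gives c_ij(1,m+1) - c_ij(1,m) = c_ji(1,1) - c_ji(1,0), so
   c_ij(1,.) is affine with a slope that is symmetric in i and j. *)

Set Implicit Arguments. Unset Strict Implicit. Unset Printing Implicit Defensive.
Import GRing.Theory Num.Theory.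
Local Open Scope ring_scope.

Lemma down_closed_leq (Lam : pred nat) : (forall k, Lam k.+1 -> Lam k) ->
  forall k m, (m <= k)%N -> Lam k -> Lam m.
Proof.
move=> Lam_pred; elim=> [|k IH] m; first by rewrite leqn0 => /eqP ->.
by rewrite leq_eqVlt => /orP[/eqP -> // | /IH le_mk /Lam_pred /le_mk].
Qed.

Section Configurations.
Variable V : eqType.
Implicit Types (eta : config V) (i j x : V).

Lemma deltaxx x : delta x x = 1.
Proof. by rewrite /delta eqxx. Qed.

Lemma delta_neq x y : x != y -> delta x y = 0.
Proof. by rewrite /delta eq_sym => /negbTE ->. Qed.

Lemma jump_neq eta i j x : x != i -> x != j -> jump eta i j x = eta x.
Proof. by move=> xi xj; rewrite /jump !delta_neq 1?eq_sym // subr0 addr0. Qed.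

Lemma remove1_neq eta i x : x != i -> remove1 eta i x = eta x.
Proof. by move=> xi; rewrite /remove1 delta_neq 1?eq_sym // subr0. Qed.

Lemma jump_source eta i j : i != j -> jump eta i j i = eta i - 1.
Proof. by move=> ij; rewrite /jump deltaxx delta_neq 1?eq_sym // addr0. Qed.

Lemma jump_target eta i j : i != j -> jump eta i j j = eta j + 1.
Proof. by move=> ij; rewrite /jump deltaxx delta_neq // subr0. Qed.

Lemma remove1_self eta i : remove1 eta i i = eta i - 1.
Proof. by rewrite /remove1 deltaxx. Qed.

Lemma remove1_jump eta i j x : remove1 (jump eta i j) x = jump (remove1 eta x) i j.
Proof. by apply/funext => y; rewrite /remove1 /jump; ring. Qed.

Lemma remove1_jump_target eta i j : remove1 (jump eta i j) j = remove1 eta i.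
Proof. by apply/funext => y; rewrite /remove1 /jump; ring. Qed.

Lemma jump_remove1 eta i j : jump (remove1 eta i) j i = remove1 eta j.
Proof. by apply/funext => y; rewrite /remove1 /jump; ring. Qed.

End Configurations.

Section RateDefects.
Variables (R : pzRingType) (V : Type) (c : V -> V -> nat -> nat -> R).

Definition recursion_defect (i j : V) (a b : nat) : R :=
  c i j a b * (a%:R - 1) - a%:R * c i j a.-1 b.

Definition balance_defect (i j : V) (a b : nat) : R :=
  b%:R * (c i j a b - c i j a b.-1) - a%:R * (c j i b a - c j i b a.-1).

End RateDefects.

Section EdgeCommutator.
Variables (R : realType) (V : countType).
Implicit Types (f : config V -> R) (eta : config V).

Definition site_annihilation (x : V) f eta : R := (eta x)%:~R * f (remove1 eta x).

Lemma annihilation_seq f eta (r : seq V) : uniq r ->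
  (forall x, x \notin r -> eta x = 0) ->
  annihilation f eta = \sum_(x <- r) site_annihilation x f eta.
Proof.
move=> r_uniq eta_r; rewrite /annihilation (fsbigE r) //.
  by apply: eq_bigl => x; rewrite in_setT.
by move=> x _ /eta_r ->; rewrite mul0r.
Qed.

Lemma gen_edge_sym (c : V -> V -> nat -> nat -> R) i j :
  gen_edge c i j = gen_edge c j i.
Proof. by apply/funext => f; apply/funext => eta; rewrite /gen_edge addrC. Qed.

Variables (c : V -> V -> nat -> nat -> R) (i j : V).

Lemma gen_edge_sum (r : seq V) (F : V -> config V -> R) eta :
  gen_edge c i j (fun z => \sum_(x <- r) F x z) eta =
  \sum_(x <- r) gen_edge c i j (F x) eta.
Proof. by rewrite /gen_edge -!sumrB !mulr_sumr -big_split. Qed.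

Lemma gen_edge_site_off x f eta : x != i -> x != j ->
  gen_edge c i j (site_annihilation x f) eta =
  site_annihilation x (gen_edge c i j f) eta.
Proof.
move=> xi xj; rewrite /gen_edge /site_annihilation !jump_neq // !remove1_jump.
by rewrite !remove1_neq 1?eq_sym //; ring.
Qed.

Lemma commutator_edge_sites f eta : i != j -> finite_config eta ->
  commutator (gen_edge c i j) (@annihilation R V) f eta =
    (gen_edge c i j (site_annihilation i f) eta
       - site_annihilation i (gen_edge c i j f) eta)
  + (gen_edge c i j (site_annihilation j f) eta
       - site_annihilation j (gen_edge c i j f) eta).
Proof.
move=> ij /finite_seqP[s supp_s].
pose r := undup [:: i, j & s].
have r_uniq : uniq r := undup_uniq _.
have ir : i \in r by rewrite mem_undup inE eqxx.
have jr : j \in r by rewrite mem_undup !inE eqxx orbT.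
have off_r x : x \notin r -> [/\ x != i, x != j & eta x = 0].
  rewrite mem_undup !inE !negb_or => /and3P[xi xj xs]; split=> //.
  apply/eqP; apply: contraNT xs => eta_x.
  by have : [set y | eta y != 0]%classic x by []; rewrite supp_s.
have ann_r g z : (forall x, x \notin r -> z x = 0) ->
    annihilation g z = \sum_(x <- r) site_annihilation x g z.
  exact: annihilation_seq.
rewrite /commutator {1}/gen_edge !ann_r;
  try by move=> x /off_r[xi xj eta_x]; rewrite ?jump_neq.
rewrite -[X in X - _]/(gen_edge c i j
  (fun z => \sum_(x <- r) site_annihilation x f z) eta).
rewrite gen_edge_sum -sumrB (big_rem i) //= (big_rem j) /=;
  last by rewrite mem_rem_uniq // inE eq_sym ij.
rewrite big1_seq ?addr0 // => x /andP[_].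
rewrite mem_rem_uniq ?rem_uniq // inE => /andP[xj].
rewrite mem_rem_uniq // inE => /andP[xi _].
by rewrite gen_edge_site_off ?subrr.
Qed.

Lemma edge_site_commutator f eta a b : i != j -> eta i = a%:Z -> eta j = b%:Z ->
  gen_edge c i j (site_annihilation i f) eta
    - site_annihilation i (gen_edge c i j f) eta =
    c i j a b * ((a%:R - 1) * f (jump (remove1 eta i) i j) - a%:R * f (remove1 eta i))
  + c j i b a * ((a%:R + 1) * f (remove1 eta j) - a%:R * f (remove1 eta i))
  - a%:R * (c i j a.-1 b * (f (jump (remove1 eta i) i j) - f (remove1 eta i))
            + c j i b a.-1 * (f (remove1 eta j) - f (remove1 eta i))).
Proof.
move=> ij eta_i eta_j.
have ji : j != i by rewrite eq_sym.
rewrite /gen_edge /site_annihilation remove1_jump remove1_jump_target jump_remove1.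
rewrite jump_source // jump_target // remove1_self remove1_neq // eta_i eta_j !absz_nat.
(* For a = 0, [|eta i - 1|] is 1 rather than [a.-1], but it is multiplied by a. *)
case: a {eta_i} => [|a]; first by rewrite /=; ring.
have -> : `|a.+1%:Z - 1|%N = a by lia.
rewrite /=; ring.
Qed.

End EdgeCommutator.

Lemma commutator_edge_formula (R : realType) (V : countType)
  (c : V -> V -> nat -> nat -> R) (i j : V) (f : config V -> R) (eta : config V)
  (a b : nat) :
  i != j -> finite_config eta -> eta i = a%:Z -> eta j = b%:Z ->
  commutator (gen_edge c i j) (@annihilation R V) f eta =
    recursion_defect c i j a b * (f (jump (remove1 eta i) i j) - f (remove1 eta i))
  + recursion_defect c j i b a * (f (jump (remove1 eta j) j i) - f (remove1 eta j))
  + balance_defect c i j a b * (f (remove1 eta i) - f (remove1 eta j)).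
Proof.
move=> ij eta_fin eta_i eta_j; have ji : j != i by rewrite eq_sym.
rewrite commutator_edge_sites // (edge_site_commutator _ _ ij eta_i eta_j).
rewrite gen_edge_sym (edge_site_commutator _ _ ji eta_j eta_i).
by rewrite /recursion_defect /balance_defect; ring.
Qed.

Section Necessity.
Variables (R : realType) (V : countType) (Lam : pred nat).
Variables (c : V -> V -> nat -> nat -> R) (i j : V).

Definition two_site_config (a b : nat) : config V :=
  fun y => if y == i then a%:Z else if y == j then b%:Z else 0.

Lemma two_site_config_state a b : Lam 0 -> Lam a -> Lam b ->
  in_state_space Lam (two_site_config a b).
Proof.
move=> Lam0 Lam_a Lam_b; split.
  apply: (@sub_finite_set _ _ [set` [:: i; j]]).
    move=> y /=; rewrite /two_site_config !inE.
    by case: (y == i); case: (y == j); rewrite ?orbT ?eqxx.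
  by apply/finite_seqP; exists [:: i; j].
by move=> x; rewrite /two_site_config; case: (x == i) => //; case: (x == j).
Qed.

Lemma commutes_edge_defects a b : i != j -> Lam 0 -> Lam a -> Lam b ->
  commutes_edge Lam c i j ->
  recursion_defect c i j a b = 0 /\ balance_defect c i j a b = 0.
Proof.
move=> ij Lam0 Lam_a Lam_b comm_ij.
have eta_state := two_site_config_state Lam0 Lam_a Lam_b.
set eta := two_site_config a b in eta_state.
have eta_i : eta i = a%:Z by rewrite /eta /two_site_config eqxx.
have eta_j : eta j = b%:Z by rewrite /eta /two_site_config eq_sym (negbTE ij) eqxx.
(* The four configurations of [commutator_edge_formula] take the values
   a - 2, a - 1, a, a + 1 at site i. *)
pose test (k : int) (z : config V) : R := (z i - eta i == k)%:R.
have [shift1 shift_i shift_j shift4] :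
    [/\ jump (remove1 eta i) i j i - eta i = -2, remove1 eta i i - eta i = -1,
        remove1 eta j i - eta i = 0 & jump (remove1 eta j) j i i - eta i = 1].
  rewrite jump_source // jump_target 1?eq_sym // remove1_self !remove1_neq //.
  by split; ring.
have := comm_ij (test (-2)) eta eta_state.
have := comm_ij (test (-1)) eta eta_state.
rewrite !(commutator_edge_formula _ _ ij eta_state.1 eta_i eta_j).
rewrite /test shift1 shift_i shift_j shift4 /= => bal_eq rec_eq.
by split; lra.
Qed.

End Necessity.

Section AffineRates.
Variables (R : comPzRingType) (V : eqType) (Lam : pred nat).
Hypothesis Lam_pred : forall k, Lam k.+1 -> Lam k.
Variables (theta alpha : V -> V -> R) (c : V -> V -> nat -> nat -> R).
Hypothesis theta_sym : forall i j, theta i j = theta j i.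
Hypothesis c_affine : forall i j, i != j -> forall k m, Lam k -> Lam m ->
  c i j k m = k%:R * (theta i j * m%:R + alpha i j).

Lemma affine_recursion_defect i j a b : i != j -> Lam a -> Lam b ->
  recursion_defect c i j a b = 0.
Proof.
move=> ij Lam_a Lam_b; have Lam_a' := down_closed_leq Lam_pred (leq_pred a) Lam_a.
rewrite /recursion_defect !c_affine //.
by case: a {Lam_a Lam_a'} => [|a] /=; ring.
Qed.

Lemma affine_balance_defect i j a b : i != j -> Lam a -> Lam b ->
  balance_defect c i j a b = 0.
Proof.
move=> ij Lam_a Lam_b; have ji : j != i by rewrite eq_sym.
have Lam_a' := down_closed_leq Lam_pred (leq_pred a) Lam_a.
have Lam_b' := down_closed_leq Lam_pred (leq_pred b) Lam_b.
rewrite /balance_defect !c_affine // (theta_sym j i).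
by case: a {Lam_a Lam_a'} => [|a]; case: b {Lam_b Lam_b'} => [|b] /=; ring.
Qed.

End AffineRates.

Section RateSolution.
Variables (R : numFieldType) (V : eqType) (Lam : pred nat).
Hypothesis Lam_pred : forall k, Lam k.+1 -> Lam k.
Variable c : V -> V -> nat -> nat -> R.
Hypothesis recursion0 : forall i j, i != j -> forall a b, Lam a -> Lam b ->
  recursion_defect c i j a b = 0.
Hypothesis balance0 : forall i j, i != j -> forall a b, Lam a -> Lam b ->
  balance_defect c i j a b = 0.

Lemma rate_empty_source i j m : i != j -> Lam m -> c i j 0 m = 0.
Proof.
move=> ij Lam_m; have Lam0 := down_closed_leq Lam_pred (leq0n m) Lam_m.
have := recursion0 ij Lam0 Lam_m.
rewrite /recursion_defect /= mul0r subr0 sub0r mulrN1 => /eqP.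
by rewrite oppr_eq0 => /eqP.
Qed.

Lemma rate_linear_source i j k m : i != j -> Lam k -> Lam m ->
  c i j k m = k%:R * c i j 1 m.
Proof.
move=> ij; elim: k => [|k IH] Lam_k Lam_m; first by rewrite rate_empty_source ?mul0r.
case: k IH Lam_k => [|k] IH Lam_k; first by rewrite mul1r.
have := recursion0 ij Lam_k Lam_m.
rewrite /recursion_defect /= IH //; last exact: Lam_pred.
rewrite -natr1 addrK => /eqP; rewrite subr_eq0 => /eqP rec_k.
apply: (@mulIf _ k.+1%:R); first by rewrite pnatr_eq0.
by rewrite rec_k; ring.
Qed.

Definition rate_slope i j : R := c i j 1 1 - c i j 1 0.

Lemma rate_one_increment i j m : i != j -> Lam m.+1 ->
  c i j 1 m.+1 - c i j 1 m = rate_slope j i.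
Proof.
move=> ij Lam_m1; have ji : j != i by rewrite eq_sym.
have Lam1 := down_closed_leq Lam_pred (ltn0Sn m) Lam_m1.
have Lam0 := down_closed_leq Lam_pred (leq0n m.+1) Lam_m1.
have := balance0 ij Lam1 Lam_m1; rewrite /balance_defect /=.
rewrite (rate_linear_source ji Lam_m1 Lam1) (rate_linear_source ji Lam_m1 Lam0) mul1r.
move=> /eqP; rewrite subr_eq0 -mulrBr => /eqP /(mulfI _).
by apply; rewrite pnatr_eq0.
Qed.

Lemma rate_slope_sym i j : i != j -> Lam 1 -> rate_slope i j = rate_slope j i.
Proof. exact: rate_one_increment. Qed.

Lemma rate_one_affine i j m : i != j -> Lam m ->
  c i j 1 m = rate_slope j i * m%:R + c i j 1 0.
Proof.
move=> ij; elim: m => [|m IH] Lam_m; first by rewrite mulr0 add0r.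
have := rate_one_increment ij Lam_m; rewrite IH; last exact: Lam_pred.
by move=> /eqP; rewrite subr_eq => /eqP ->; rewrite -natr1; ring.
Qed.

(* [rate_slope] is symmetric only when [Lam 1]; averaging makes the slope
   symmetric unconditionally. *)
Definition mean_slope i j : R := (rate_slope i j + rate_slope j i) / 2.

Lemma mean_slope_sym i j : mean_slope i j = mean_slope j i.
Proof. by rewrite /mean_slope addrC. Qed.

Lemma rate_affine i j k m : i != j -> Lam k -> Lam m ->
  c i j k m = k%:R * (mean_slope i j * m%:R + c i j 1 0).
Proof.
move=> ij Lam_k Lam_m; rewrite rate_linear_source //.
case: k Lam_k => [|k] Lam_k; first by rewrite !mul0r.
have Lam1 := down_closed_leq Lam_pred (ltn0Sn k) Lam_k.
rewrite rate_one_affine // /mean_slope (rate_slope_sym ij Lam1) -mulr2n.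
by rewrite -[_ *+ 2]mulr_natr mulfK ?pnatr_eq0.
Qed.

End RateSolution.

Theorem theorem3p3 (R : realType) (V : countType) (Lam : pred nat)
  (HLam : forall k : nat, Lam k.+1 -> Lam k)
  (c : V -> V -> nat -> nat -> R) :
  (forall i j : V, i != j -> commutes_edge Lam c i j) <->
  (exists (theta : V -> V -> R) (alpha : V -> V -> R),
     (forall i j : V, theta i j = theta j i) /\
     (forall i j : V, i != j -> forall k m : nat, Lam k -> Lam m ->
        c i j k m = k%:R * (theta i j * m%:R + alpha i j))).
Proof.
split=> [commutes | [theta [alpha [theta_sym c_affine]]]].
  have defects i j a b : i != j -> Lam a -> Lam b ->
      recursion_defect c i j a b = 0 /\ balance_defect c i j a b = 0.
    move=> ij Lam_a Lam_b; have Lam0 := down_closed_leq HLam (leq0n a) Lam_a.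
    exact: commutes_edge_defects ij Lam0 Lam_a Lam_b (commutes i j ij).
  exists (mean_slope c), (fun i j => c i j 1 0); split; first exact: mean_slope_sym.
  move=> i j ij k m Lam_k Lam_m.
  by apply: (rate_affine HLam) => // i' j' ij' a b Lam_a Lam_b;
    case: (defects i' j' a b ij' Lam_a Lam_b).
move=> i j ij f eta [eta_fin eta_vals].
have [eta_i_ge0 Lam_i] := eta_vals i; have [eta_j_ge0 Lam_j] := eta_vals j.
have eta_i : eta i = `|eta i|%N by rewrite gez0_abs.
have eta_j : eta j = `|eta j|%N by rewrite gez0_abs.
rewrite (commutator_edge_formula c f ij eta_fin eta_i eta_j).
have ji : j != i by rewrite eq_sym.
rewrite !(affine_recursion_defect HLam c_affine) //.
by rewrite (affine_balance_defect HLam theta_sym c_affine) // !mul0r !addr0.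
Qed.
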